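(* Let $a,a^{\dagger},b,b^{\dagger}$ be linear operators (with $a^{\dagger},b^{\dagger}$ the adjoints of $a,b$) satisfying $\ker a^{\dagger}=\{0\}=\ker b$ and $$[a^{\dagger}a,a^{\dagger}b]=\lambda a^{\dagger}b,\quad [bb^{\dagger},ba^{\dagger}]=\lambda' ba^{\dagger},\quad [a^{\dagger}b,b^{\dagger}a]=\mu a^{\dagger}a+\nu,\quad [ba^{\dagger},ab^{\dagger}]=\mu' aa^{\dagger}+\nu',$$ where $\lambda,\lambda',\nu,\nu'\in\mathbb R$, $\lambda\neq 0$, and $\mu,\mu'$ are constants. Then there exist $\alpha,\beta,\gamma,\delta\in\mathbb R$ such that $b^{\dagger}b=\alpha a^{\dagger}a+\gamma$ and $bb^{\dagger}=\beta aa^{\dagger}+\delta$.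
   Context: $[X,Y]=XY-YX$ denotes the commutator; all identities are understood as operator identities on a suitable common domain. *)

From mathcomp Require Import all_boot all_order all_algebra.
Set Implicit Arguments. Unset Strict Implicit. Unset Printing Implicit Defensive.
Import Order.TTheory GRing.Theory Num.Theory.
Local Open Scope ring_scope.

Section Defs.
Variables (C : numClosedFieldType) (V : lmodType C).

(* An inner product on V (linear in the first argument, conjugate
   symmetric, positive definite): V is a (pre-)Hilbert space, i.e. the
   common domain on which all operators act. *)
Definition inner_product (ip : V -> V -> C) : Prop :=
  [/\ forall (c : C) (u v w : V), ip (c *: u + v) w = c * ip u w + ip v w,
      forall u v : V, ip u v = (ip v u)^*,
      forall u : V, 0 <= ip u u
    & forall u : V, ip u u = 0 -> u = 0].

Definition is_adjoint (ip : V -> V -> C) (f g : V -> V) : Prop :=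
  forall u v : V, ip (f u) v = ip u (g v).

Definition comm (f g : V -> V) : V -> V := fun v => f (g v) - g (f v).
End Defs.

(* The first two relations, cancelled by the injective a^+ and b, give the
   intertwinings a a^+ b = b a^+ a + lam b and b^+ b a^+ = a^+ b b^+ + lam' a^+.
   Substituted into the last two relations, these turn them into
   lam b^+ b = k a^+ a - nu and lam b b^+ = k' a a^+ - nu'.
   Pairing the first with v shows that k <a^+ a v, v> is real for every v, so
   either k is real or a^+ a = 0, in which case k may be replaced by 0. *)
From mathcomp Require Import all_boot all_order all_algebra.
Import Order.TTheory GRing.Theory Num.Theory.
Set Implicit Arguments.
Unset Strict Implicit.
Unset Printing Implicit Defensive.

Local Open Scope ring_scope.

Section Intertwining.
Variables (C : numClosedFieldType) (V : lmodType C).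

Lemma comm_injl_intertwine (f g h : {linear V -> V}) (lam : C) :
    (forall v, f v = 0 -> v = 0) ->
    comm (f \o g) (f \o h) =1 (fun v => lam *: f (h v)) ->
  forall v, g (f (h v)) = h (f (g v)) + lam *: h v.
Proof.
move=> kerf fgh_comm v; have := fgh_comm v; rewrite /comm /= => Efgh.
apply/eqP; rewrite -subr_eq0; apply/eqP/kerf.
by rewrite linearB linearD linearZ /= opprD addrA Efgh subrr.
Qed.

Lemma comm_of_intertwine (p q r s : {linear V -> V}) (l1 l2 : C) :
    (forall v, p (q (r v)) = r (q (p v)) + l1 *: r v) ->
    (forall v, s (r (q v)) = q (r (s v)) + l2 *: q v) ->
  comm (q \o r) (s \o p) =1 (fun v => - (l1 *: s (r v) + l2 *: q (p v))).
Proof.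
move=> Epqr Esrq v; rewrite /comm /= Epqr linearD linearZ /= Esrq.
by rewrite !opprD !addrA subrr add0r addrC.
Qed.

Lemma oppDZ_eq (x y z : V) (l m : C) :
  - (x + l *: y) = m *: y + z -> x = - (m + l) *: y - z.
Proof.
move/eqP; rewrite eqr_oppLR => /eqP/(canRL (addrK _)) ->.
by rewrite !scaleNr scalerDl !opprD addrAC.
Qed.

End Intertwining.

Section PositiveOperators.
Variables (C : numClosedFieldType) (V : lmodType C) (ip : V -> V -> C).
Hypothesis ip_inner : inner_product ip.

Lemma ip0l w : ip 0 w = 0.
Proof.
have [ip_lin _ _ _] := ip_inner.
have := ip_lin 1 0 0 w; rewrite scaler0 addr0 mul1r => ip0D.
by apply: (@addrI _ (ip 0 w)); rewrite addr0 -ip0D.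
Qed.

Lemma ipZl c u w : ip (c *: u) w = c * ip u w.
Proof.
have [ip_lin _ _ _] := ip_inner.
by have := ip_lin c u 0 w; rewrite addr0 ip0l addr0.
Qed.

Lemma adjoint_sym (f g : V -> V) : is_adjoint ip f g -> is_adjoint ip g f.
Proof. by have [_ ipC _ _] := ip_inner; move=> fg u v; rewrite ipC -fg -ipC. Qed.

Lemma adjoint_comp_ge0 (f g : V -> V) v : is_adjoint ip f g -> 0 <= ip (f (g v)) v.
Proof. by have [_ _ ip_ge0 _] := ip_inner; move=> fg; rewrite fg. Qed.

Lemma adjoint_comp_eq0 (f g : {linear V -> V}) v :
  is_adjoint ip f g -> ip (f (g v)) v = 0 -> f (g v) = 0.
Proof.
by have [_ _ _ ip_def] := ip_inner; move=> fg; rewrite fg => /ip_def ->; rewrite linear0.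
Qed.

Lemma adjoint_comp_real_scale (f g : {linear V -> V}) (kap : C) :
    is_adjoint ip f g -> (forall v, kap * ip (f (g v)) v \is Num.real) ->
  exists2 al : C, al \is Num.real & forall v, kap *: f (g v) = al *: f (g v).
Proof.
move=> fg kap_form_real; have [kap_real | kap_nreal] := boolP (kap \is Num.real).
  by exists kap.
exists 0 => [|v]; first exact: rpred0.
suff -> : f (g v) = 0 by rewrite !scaler0.
apply: (adjoint_comp_eq0 fg); apply/eqP; apply: contraNT kap_nreal => form_neq0.
rewrite -(mulfK form_neq0 kap) rpredM ?kap_form_real // rpredV.
exact: ger0_real (adjoint_comp_ge0 _ fg).
Qed.

Lemma adjoint_comp_real_affine (f g h k : {linear V -> V}) (lam kap n : C) :
    is_adjoint ip f g -> is_adjoint ip h k ->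
    lam != 0 -> lam \is Num.real -> n \is Num.real ->
    (forall v, lam *: f (g v) = kap *: h (k v) - n *: v) ->
  exists al ga : C, [/\ al \is Num.real, ga \is Num.real &
    forall v, f (g v) = al *: h (k v) + ga *: v].
Proof.
move=> fg hk lam_neq0 lam_real n_real E.
have [ip_lin _ ip_ge0 _] := ip_inner.
have [al al_real kapE] : exists2 al : C, al \is Num.real &
    forall v, kap *: h (k v) = al *: h (k v).
  apply: adjoint_comp_real_scale hk _ => v.
  have := congr1 (ip^~ v) (E v); rewrite /= -scaleNr ipZl ip_lin ipZl => formE.
  rewrite -[_ * _](addrK (- n * ip v v)) -formE.
  by rewrite rpredB ?rpredM ?rpredN ?(ger0_real (ip_ge0 v))
    ?(ger0_real (adjoint_comp_ge0 _ fg)).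
exists (al / lam), (- n / lam); split; rewrite ?rpredM ?rpredN ?rpredV // => v.
apply: (scalerI lam_neq0).
by rewrite E kapE scalerDr !scalerA !(mulrCA lam) mulfV // !mulr1 scaleNr.
Qed.

End PositiveOperators.

Theorem theorem2 (C : numClosedFieldType) (V : lmodType C) (ip : V -> V -> C)
    (a ad b bd : {linear V -> V}) (lam lam' mu mu' nu nu' : C) :
  inner_product ip ->
  is_adjoint ip a ad -> is_adjoint ip b bd ->
  (forall v, ad v = 0 -> v = 0) -> (forall v, b v = 0 -> v = 0) ->
  lam \is Num.real -> lam' \is Num.real -> nu \is Num.real -> nu' \is Num.real ->
  lam != 0 ->
  comm (ad \o a) (ad \o b) =1 (fun v => lam *: ad (b v)) ->
  comm (b \o bd) (b \o ad) =1 (fun v => lam' *: b (ad v)) ->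
  comm (ad \o b) (bd \o a) =1 (fun v => mu *: ad (a v) + nu *: v) ->
  comm (b \o ad) (a \o bd) =1 (fun v => mu' *: a (ad v) + nu' *: v) ->
  exists al be ga de : C,
    [/\ al \is Num.real, be \is Num.real, ga \is Num.real & de \is Num.real] /\
    (forall v, bd (b v) = al *: ad (a v) + ga *: v) /\
    (forall v, b (bd v) = be *: a (ad v) + de *: v).
Proof.
move=> ip_inner adj_a adj_b ker_ad ker_b lam_real _ nu_real nu'_real lam_neq0.
move=> comm_aa_ab comm_bb_ba comm_ab_ba comm_ba_ab.
have Ea := comm_injl_intertwine ker_ad comm_aa_ab.
have Eb := comm_injl_intertwine ker_b comm_bb_ba.
have rel_bb v : lam *: bd (b v) = - (mu + lam') *: ad (a v) - nu *: v.
  by apply: oppDZ_eq; rewrite -(comm_of_intertwine Ea Eb) comm_ab_ba.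
have rel_bbd v : lam *: b (bd v) = - (mu' + lam') *: a (ad v) - nu' *: v.
  by apply: oppDZ_eq; rewrite addrC -(comm_of_intertwine Eb Ea) comm_ba_ab.
have [al [ga [al_real ga_real E_bb]]] :=
  adjoint_comp_real_affine ip_inner (adjoint_sym ip_inner adj_b)
    (adjoint_sym ip_inner adj_a) lam_neq0 lam_real nu_real rel_bb.
have [be [de [be_real de_real E_bbd]]] :=
  adjoint_comp_real_affine ip_inner adj_b adj_a lam_neq0 lam_real
    nu'_real rel_bbd.
by exists al, be, ga, de.
Qed.
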